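(* Let $\mathcal P=\{a\otimes b:\ a\in\Delta^3,\ b\in\Delta^4\}$, where $(a\otimes b)_{(r,s)}=a_rb_s$. Let $W=a\otimes b\in\mathcal P$. If the AdaBoost step on $M_0$ from $W$ selects a column $A_j$, then the updated state is $W'=a'\otimes b$, where $a'$ is the one-step AdaBoost update of $a$ on $L_A$ using column $j$, i.e. $a'_r=a_r/(1+\mu(L_A)_{rj})$ with $\mu=(a^\top L_A)_j$. If it selects a column $B_j$, then $W'=a\otimes b'$, where $b'$ is the one-step update of $b$ on $L_B$ using column $j$. Hence $\mathcal P$ is invariant under the exhaustive AdaBoost dynamics on $M_0$.
   Context: Let $$L_A=\begin{pmatrix}1&1&-1&-1\\-1&1&1&1\\1&-1&-1&1\\1&-1&1&-1\end{pmatrix},\qquad L_B=\begin{pmatrix}1&1&-1&-1\\-1&1&1&1\\1&-1&-1&1\\1&-1&1&-1\\1&-1&1&1\end{pmatrix}.$$ The $20\times 8$ matrix $M_0$ has rows indexed by $(r,s)\in\{1,\dots,4\}\times\{1,\dots,5\}$ and columns $A_1,\dots,A_4,B_1,\dots,B_4$, with $M_0((r,s),A_j)=(L_A)_{rj}$, $M_0((r,s),B_j)=(L_B)_{sj}$. Exhaustive AdaBoost on a matrix $M\in\{-1,+1\}^{m\times N}$ maps $D\in\Delta^{m-1}$ to $D'$ with $D'(i)=D(i)/(1+r M_{ij^*})$, where $j^*=\min\operatorname{argmax}_j (D^\top M)_j$ and $r=(D^\top M)_{j^*}$. The one-step update of a distribution $u$ on the rows of a sign matrix $L$ using column $j$ is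 $u'_i=u_i/(1+\mu L_{ij})$ with $\mu=(u^\top L)_j$. $\Delta^{k}$ denotes the probability simplex in $\mathbb R^{k+1}$. *)

From HB Require Import structures.
From mathcomp Require Import all_boot all_order all_algebra.
Set Implicit Arguments. Unset Strict Implicit. Unset Printing Implicit Defensive.
Import Order.TTheory GRing.Theory Num.Theory.
Local Open Scope ring_scope.

Section Defs.
Variable R : realFieldType.

Definition in_simplex (I : finType) (u : I -> R) : Prop :=
  (forall i, 0 <= u i) /\ \sum_i u i = 1.

Definition edge (I : finType) (N : nat) (L : I -> 'I_N -> R) (u : I -> R)
  (j : 'I_N) : R := \sum_i u i * L i j.

Definition is_jstar (I : finType) (N : nat) (L : I -> 'I_N -> R) (u : I -> R)
  (j : 'I_N) : Prop :=
  (forall k, edge L u k <= edge L u j) /\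
  (forall k, edge L u k = edge L u j -> (j <= k)%N).

(* One-step update of u on L using column j:
   u'_i = u_i / (1 + mu L_{ij}) with mu = (u^T L)_j.
   The exhaustive AdaBoost map is this update with j = j*. *)
Definition update (I : finType) (N : nat) (L : I -> 'I_N -> R) (u : I -> R)
  (j : 'I_N) : I -> R :=
  fun i => u i / (1 + edge L u j * L i j).

Definition entry (s : seq (seq R)) (r c : nat) : R := nth 0 (nth [::] s r) c.

Definition LA_rows : seq (seq R) :=
  [:: [:: 1; 1; -1; -1];
      [:: -1; 1; 1; 1];
      [:: 1; -1; -1; 1];
      [:: 1; -1; 1; -1]].

Definition LB_rows : seq (seq R) :=
  [:: [:: 1; 1; -1; -1];
      [:: -1; 1; 1; 1];
      [:: 1; -1; -1; 1];
      [:: 1; -1; 1; -1];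
      [:: 1; -1; 1; 1]].

Definition LA : 'I_4 -> 'I_4 -> R := fun r j => entry LA_rows r j.
Definition LB : 'I_5 -> 'I_4 -> R := fun s j => entry LB_rows s j.

(* Columns of M0: 'I_(4+4); lshift 4 j is A_{j+1}, rshift 4 j is B_{j+1},
   so the index order is A_1,...,A_4,B_1,...,B_4. *)
Definition colA (j : 'I_4) : 'I_(4 + 4) := lshift 4 j.
Definition colB (j : 'I_4) : 'I_(4 + 4) := rshift 4 j.

Definition M0 : 'I_4 * 'I_5 -> 'I_(4 + 4) -> R :=
  fun p c => match split c with
             | inl j => LA p.1 j
             | inr j => LB p.2 j
             end.

Definition tensor (a : 'I_4 -> R) (b : 'I_5 -> R) : 'I_4 * 'I_5 -> R :=
  fun p => a p.1 * b p.2.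

End Defs.

From HB Require Import structures.
From mathcomp Require Import all_boot all_order all_algebra.
From mathcomp Require Import ring lra.
Import Order.TTheory GRing.Theory Num.Theory.
Local Open Scope ring_scope.

(* A column of M0 depends on one factor of the row index only, so on a
   product distribution a (x) b its edge is the edge of that factor (the
   other marginal sums to 1), and the multiplicative update rescales that
   factor alone.  For a sign column with edge mu in (-1, 1) we have
   1 / (1 + mu x) = (1 - mu x) / (1 - mu^2), so the update sums to
   (1 - mu^2) / (1 - mu^2) = 1.  Finally the selected edge is nonnegative
   because the edges of A_1 and A_2 add up to 2 a_1. *)

Section ProductDistributions.
Context {R : realFieldType} {I J : finType} {N N' : nat}.
Context {M : I * J -> 'I_N -> R} {a : I -> R} {b : J -> R} {c : 'I_N}.

Lemma edge_tensor_fst {L : I -> 'I_N' -> R} {j} :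
  (forall p, M p c = L p.1 j) -> \sum_s b s = 1 ->
  edge M (fun p => a p.1 * b p.2) c = edge L a j.
Proof.
move=> Mc b1; rewrite /edge.
under eq_bigr => p _ do rewrite Mc.
rewrite -(pair_bigA _ (fun r s => a r * b s * L r j)) /=; apply: eq_bigr => r _.
under eq_bigr => s _ do rewrite mulrAC.
by rewrite -mulr_sumr b1 mulr1.
Qed.

Lemma edge_tensor_snd {L : J -> 'I_N' -> R} {j} :
  (forall p, M p c = L p.2 j) -> \sum_r a r = 1 ->
  edge M (fun p => a p.1 * b p.2) c = edge L b j.
Proof.
move=> Mc a1; rewrite /edge.
under eq_bigr => p _ do rewrite Mc.
rewrite -(pair_bigA _ (fun r s => a r * b s * L s j)) exchange_big /=.
apply: eq_bigr => s _.
under eq_bigr => r _ do rewrite -mulrA mulrC.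
by rewrite -mulr_sumr a1 mulr1.
Qed.

Lemma update_tensor_fst {L : I -> 'I_N' -> R} {j} :
  (forall p, M p c = L p.1 j) -> \sum_s b s = 1 ->
  update M (fun p => a p.1 * b p.2) c =1 (fun p => update L a j p.1 * b p.2).
Proof.
by move=> Mc b1 p; rewrite /update (edge_tensor_fst Mc b1) Mc mulrAC.
Qed.

Lemma update_tensor_snd {L : J -> 'I_N' -> R} {j} :
  (forall p, M p c = L p.2 j) -> \sum_r a r = 1 ->
  update M (fun p => a p.1 * b p.2) c =1 (fun p => a p.1 * update L b j p.2).
Proof.
by move=> Mc a1 p; rewrite /update (edge_tensor_snd Mc a1) Mc mulrA.
Qed.

End ProductDistributions.

Section SignColumnUpdate.
Context {R : realFieldType} {I : finType} {N : nat}.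
Context {L : I -> 'I_N -> R} {u : I -> R} {j : 'I_N}.
Hypothesis L_sign : forall i, L i j = 1 \/ L i j = -1.

Lemma update_sign_col i : -1 < edge L u j < 1 ->
  update L u j i = (u i - edge L u j * (u i * L i j)) / (1 - edge L u j ^+ 2).
Proof.
rewrite /update; set mu := edge L u j => /andP[mu_gtN1 mu_lt1].
have mu2_neq1 : 1 - mu ^+ 2 != 0 by apply/eqP; nra.
case: (L_sign i) => ->; by field; rewrite mu2_neq1; apply/eqP; lra.
Qed.

Lemma update_in_simplex : in_simplex u -> -1 < edge L u j < 1 ->
  in_simplex (update L u j).
Proof.
move=> [u_ge0 u_sum1] mu_bounds; have /andP[mu_gtN1 mu_lt1] := mu_bounds.
split=> [i|].
  rewrite /update divr_ge0 // ltW //.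
  by case: (L_sign i) => ->; lra.
have mu2_neq1 : 1 - edge L u j ^+ 2 != 0 by apply/eqP; nra.
rewrite (eq_bigr _ (fun i _ => update_sign_col i mu_bounds)) -mulr_suml.
by rewrite sumrB -mulr_sumr u_sum1 -/(edge L u j) -expr2 divff.
Qed.

End SignColumnUpdate.

Section AdaBoostOnM0.
Context {R : realFieldType}.

Lemma M0_colA (j : 'I_4) p : @M0 R p (colA j) = @LA R p.1 j.
Proof. by rewrite /M0 /colA (unsplitK (inl _ j)). Qed.

Lemma M0_colB (j : 'I_4) p : @M0 R p (colB j) = @LB R p.2 j.
Proof. by rewrite /M0 /colB (unsplitK (inr _ j)). Qed.

Lemma LA_sign (r j : 'I_4) : @LA R r j = 1 \/ @LA R r j = -1.
Proof.
case: r => [[|[|[|[|r]]]] ?] //; case: j => [[|[|[|[|j]]]] ?] //;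
  rewrite /LA /entry /=; by [left|right].
Qed.

Lemma LB_sign (s : 'I_5) (j : 'I_4) : @LB R s j = 1 \/ @LB R s j = -1.
Proof.
case: s => [[|[|[|[|[|s]]]]] ?] //; case: j => [[|[|[|[|j]]]] ?] //;
  rewrite /LB /entry /=; by [left|right].
Qed.

Lemma edge_LA_col0_add_col1 (a : 'I_4 -> R) :
  edge (@LA R) a ord0 + edge (@LA R) a (lift ord0 ord0) = 2 * a ord0.
Proof. by rewrite /edge !big_ord_recl !big_ord0 /LA /entry /=; ring. Qed.

Lemma max_edge_M0_ge0 {a : 'I_4 -> R} {b : 'I_5 -> R} {c} :
  0 <= a ord0 -> \sum_s b s = 1 ->
  (forall k, edge (@M0 R) (tensor a b) k <= edge (@M0 R) (tensor a b) c) ->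
  0 <= edge (@M0 R) (tensor a b) c.
Proof.
move=> a0_ge0 b_sum1 c_max.
have edge_colA j : edge (@M0 R) (tensor a b) (colA j) = edge (@LA R) a j.
  exact: edge_tensor_fst (M0_colA j) b_sum1.
have := c_max (colA ord0); have := c_max (colA (lift ord0 ord0)).
rewrite !edge_colA; have := edge_LA_col0_add_col1 a; lra.
Qed.

End AdaBoostOnM0.

Theorem lemma2 (R : realFieldType) (a : 'I_4 -> R) (b : 'I_5 -> R) :
  in_simplex a -> in_simplex b ->
  (forall j : 'I_4, is_jstar (@M0 R) (tensor a b) (colA j) ->
     update (@M0 R) (tensor a b) (colA j) =1 tensor (update (@LA R) a j) b) /\
  (forall j : 'I_4, is_jstar (@M0 R) (tensor a b) (colB j) ->
     update (@M0 R) (tensor a b) (colB j) =1 tensor a (update (@LB R) b j)) /\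
  (forall c : 'I_(4 + 4), is_jstar (@M0 R) (tensor a b) c ->
     edge (@M0 R) (tensor a b) c < 1 ->
     exists (a' : 'I_4 -> R) (b' : 'I_5 -> R),
       [/\ in_simplex a', in_simplex b' &
           update (@M0 R) (tensor a b) c =1 tensor a' b']).
Proof.
move=> /[dup] a_simplex [a_ge0 a_sum1] /[dup] b_simplex [_ b_sum1].
have update_colA j := update_tensor_fst (a := a) (M0_colA j) b_sum1.
have update_colB j := update_tensor_snd (b := b) (M0_colB j) a_sum1.
split; first by move=> j _; exact: update_colA.
split; first by move=> j _; exact: update_colB.
move=> c [c_max _] c_lt1.
have c_ge0 := max_edge_M0_ge0 (a_ge0 ord0) b_sum1 c_max.
have c_bounds : -1 < edge (@M0 R) (tensor a b) c < 1 by apply/andP; split; lra.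
case: (split c) (splitK c) c_bounds => j <- c_bounds.
- exists (update (@LA R) a j), b; split=> //; last exact: update_colA.
  apply: update_in_simplex => //; first by move=> r; apply: LA_sign.
  by rewrite -(edge_tensor_fst (a := a) (M0_colA j) b_sum1).
- exists a, (update (@LB R) b j); split=> //; last exact: update_colB.
  apply: update_in_simplex => //; first by move=> s; apply: LB_sign.
  by rewrite -(edge_tensor_snd (b := b) (M0_colB j) a_sum1).
Qed.
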